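(* Let $A$ be a finite set, $\bot,\dagger\notin A$ distinct extra symbols, $N\geq1$, and let $\mathsf L$, $\pi$ and $\zeta_t$ ($t>0$) be as in the context. Then for all $x,y\in\mathsf L$, $$\zeta_t^{-1}(x,y)=\begin{cases}-\pi(y|x)^t & \text{if } y\in\mathsf L_x^{(1)},\\ 1 & \text{if } y=x,\\ 0&\text{otherwise},\end{cases}$$ where $\mathsf L_x^{(1)}=\{y\in\mathsf L: y=xa \text{ for some } a\in A\cup\{\dagger\}\}$ is the set of elements of $\mathsf L$ extending $x$ on the right by exactly one token.
   Context: $A^*$ is the set of finite strings over $A$, $|x|$ denotes length (with $\bot,\dagger$ counted). $\mathsf L=\{\bot a : a\in A^*,\ |a|\leq N-1\}\sqcup\{\bot a\dagger : a\in A^*,\ |a|<N-1\}$, partially ordered by the prefix relation ($x\leq y$ iff $y=xa'$ for some string $a'$). Strings $\bot a$ are unfinished texts. For each unfinished text $x\in\mathsf L$ with $|x|\leq N-1$ a probability mass function $p(-|x)$ on $A\cup\{\dagger\}$ is given. Define $\pi(y|x)=1$ if $x=y$; $0$ if $x\not\leq y$; and if $x=\bot a_1\cdots a_t$ is a proper prefix of $y=xa_{t+1}\cdots a_{t+k}$, $\pi(y|x)=\prod_{i=1}^k p(a_{t+i}\mid\bot a_1\cdots a_{t+i-1})$. For $t>0$, $\zeta_t$ is the $\mathsf L\times\mathsf L$ matrix $\zeta_t(x,y)=\pi(y|x)^t$ (which is invertible). *)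

From HB Require Import structures.
From mathcomp Require Import all_boot all_order all_algebra.
From mathcomp Require Import reals exp.
Set Implicit Arguments. Unset Strict Implicit. Unset Printing Implicit Defensive.
Import Order.TTheory GRing.Theory Num.Theory.
Local Open Scope ring_scope.

(* Tokens: [Some a] for a letter a in A, [None] for the end symbol dagger.
   The start symbol bot is the common first token of every text and is left
   implicit. *)

Section Texts.
Variable A : finType.
Variable N : nat.

(* A text  bot a  (fin = false) or  bot a dagger  (fin = true), a in A^*. *)
Definition Lpred (x : (N.-1).-bseq A * bool) : bool :=
  x.2 ==> (size x.1 < N.-1)%N.

Definition Ltype := {x : (N.-1).-bseq A * bool | Lpred x}.

Definition body (x : Ltype) : seq A := (val x).1.
Definition finished (x : Ltype) : bool := (val x).2.

Definition word (x : Ltype) : seq (option A) :=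
  map Some (body x) ++ (if finished x then [:: None] else [::]).

Definition Lle (x y : Ltype) : bool := prefix (word x) (word y).

Definition Lchild (x y : Ltype) : bool :=
  [exists a : option A, word y == rcons (word x) a].

Variable R : realType.
(* p s o = p(o | bot s), the next-token distribution after the unfinished
   text bot s. *)
Variable p : seq A -> option A -> R.

Definition pi (y x : Ltype) : R :=
  if x == y then 1
  else if ~~ Lle x y then 0
  else \prod_(size (word x) <= i < size (word y))
         p (take i (body y)) (nth None (word y) i).

Definition zeta (t : R) : 'M[R]_#|{: Ltype}| :=
  \matrix_(i, j) powR (pi (enum_val j) (enum_val i)) t.

Definition zeta_inv_formula (t : R) (x y : Ltype) : R :=
  if Lchild x y then - powR (pi y x) t
  else if y == x then 1 else 0.

End Texts.

From Pilot Require Import Defs.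
From HB Require Import structures.
From mathcomp Require Import all_boot all_order all_algebra.
From mathcomp Require Import reals exp.
From mathcomp Require Import zify.
Set Implicit Arguments. Unset Strict Implicit. Unset Printing Implicit Defensive.
Import Order.TTheory GRing.Theory Num.Theory.
Local Open Scope ring_scope.

(* Every text z other than the bare start symbol has a unique parent w, obtained
   by deleting its last token, and x <= z with x <> z forces x <= w.  Since pi is
   a product of next-token probabilities along the prefix order, it is
   multiplicative on chains: pi(z|x) = pi(w|x) pi(z|w) for x <= w.  Raising to
   the power t (which needs p >= 0, the only property of p used) gives
   pi(z|x)^t = [x = z] + pi(w|x)^t pi(z|w)^t, which says exactly that the matrix
   with 1 on the diagonal and -pi(z|w)^t at (w, z) is a right inverse of zeta_t. *)

Section EnumMatrix.
Variables (R : comUnitRingType) (T : finType).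

Definition enum_mx (f : T -> T -> R) : 'M[R]_#|{: T}| :=
  \matrix_(i, j) f (enum_val i) (enum_val j).

Lemma enum_mxE f x y : enum_mx f (enum_rank x) (enum_rank y) = f x y.
Proof. by rewrite mxE !enum_rankK. Qed.

Lemma mulmx_enum_mx f g :
  enum_mx f *m enum_mx g = enum_mx (fun x z => \sum_y f x y * g y z).
Proof.
apply/matrixP => i j; rewrite !mxE (reindex (@enum_rank T)) /=; last first.
  exact/onW_bij/enum_rank_bij.
by apply: eq_bigr => y _; rewrite !mxE enum_rankK.
Qed.

Lemma invmx_enum_mx f g :
  (forall x z, \sum_y f x y * g y z = (x == z)%:R) ->
  enum_mx f \in unitmx /\ invmx (enum_mx f) = enum_mx g.
Proof.
move=> fg; have fg1 : enum_mx f *m enum_mx g = 1%:M.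
  rewrite mulmx_enum_mx; apply/matrixP => i j.
  by rewrite !mxE fg (inj_eq enum_val_inj).
have [fU _] := mulmx1_unit fg1; split=> //.
by rewrite -[invmx _]mulmx1 -fg1 mulKmx.
Qed.

End EnumMatrix.

Section Texts.
Variables (A : finType) (N : nat).
Local Notation L := (Ltype A N).
Local Notation pi := Defs.pi.

Lemma size_word (x : L) : size (word x) = (size (body x) + finished x)%N.
Proof. by rewrite /word size_cat size_map; case: (finished x). Qed.

Lemma size_word_le (x : L) : (size (word x) <= N.-1)%N.
Proof.
rewrite size_word; case: x => [[b [|]] /= Hb]; rewrite /body /finished /=.
  by rewrite addn1.
by rewrite addn0 size_bseq.
Qed.

Lemma finished_word (x : L) : finished x = (None \in word x).
Proof.
rewrite /word mem_cat; case: (finished x); rewrite ?orbT //= orbF.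
by apply/esym/negbTE/mapP => -[].
Qed.

Lemma word_inj : injective (@word A N).
Proof.
move=> x y wxy; have fxy : finished x = finished y by rewrite !finished_word wxy.
have bxy : body x = body y.
  apply: (inj_map Some_inj); move: wxy; rewrite /word fxy.
  by case: (finished y); rewrite ?cats1 ?cats0 // => E; apply: rcons_injl E.
case: x y fxy bxy {wxy} => [[bx fx] Hx] [[b_y fy] Hy]; rewrite /body /finished /=.
by move=> fxy /val_inj bxy; apply: val_inj; rewrite /= fxy bxy.
Qed.

Lemma take_word (x : L) i :
  (i < size (word x))%N -> take i (word x) = map Some (take i (body x)).
Proof.
rewrite size_word => ix; rewrite /word takel_cat ?map_take // size_map.
by move: ix; case: (finished x) => /=; lia.
Qed.

Lemma Lchild_word (w z : L) : Lchild w z -> exists a, word z = rcons (word w) a.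
Proof. by case/existsP => a /eqP ->; exists a. Qed.

Lemma Lchild_Lle (w z : L) : Lchild w z -> Lle w z.
Proof. by case/Lchild_word => a; rewrite /Lle => ->; apply: prefix_rcons. Qed.

Lemma size_Lchild (w z : L) : Lchild w z -> size (word z) = (size (word w)).+1.
Proof. by case/Lchild_word => a ->; rewrite size_rcons. Qed.

Lemma Lchild_neq (w z : L) : Lchild w z -> w != z.
Proof. by move=> /size_Lchild wz; apply/eqP => E; move: wz; rewrite E; lia. Qed.

Lemma Lchild_notLle (w z : L) : Lchild w z -> ~~ Lle z w.
Proof.
by move=> /size_Lchild wz; rewrite /Lle; apply/negP => /size_prefix; rewrite wz ltnn.
Qed.

Lemma Lchild_inj (y w z : L) : Lchild y z -> Lchild w z -> y = w.
Proof.
case/Lchild_word => a wz; case/Lchild_word => b.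
by rewrite wz => /rcons_inj [wyw _]; apply: word_inj.
Qed.

Lemma Lle_parent (x w z : L) : Lchild w z -> Lle x z -> x = z \/ Lle x w.
Proof.
case/Lchild_word => a wz; rewrite /Lle wz => xz.
have := size_prefix xz; rewrite size_rcons leq_eqVlt ltnS => /orP [/eqP sx|sx].
  left; apply: word_inj; move: xz; rewrite prefixE sx -(size_rcons _ a) take_size.
  by rewrite wz => /eqP.
by right; move: xz; rewrite prefixE -cats1 takel_cat // -prefixE.
Qed.

Lemma exists_parent (z : L) : word z != [::] -> exists w : L, Lchild w z.
Proof.
case: z => [[b [|]] Hb]; rewrite /word /body /finished /= => zne.
  exists (exist (@Lpred A N) (b, false) isT).
  by apply/existsP; exists None; rewrite /word /body /finished /= cats0 cats1.
case/lastP E: (b : seq A) zne => [|s c] // _.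
have sN : (size s <= N.-1)%N by have := size_bseq b; rewrite E size_rcons; lia.
exists (exist (@Lpred A N) (Bseq sN, false) isT).
by apply/existsP; exists (Some c); rewrite /word /body /finished /= !cats0 E map_rcons.
Qed.

Lemma word_eq_nil (x z : L) : word z = [::] -> Lle x z -> x = z.
Proof.
by rewrite /Lle => wz; rewrite wz prefixs0 => /eqP wx; apply: word_inj; rewrite wx.
Qed.

Section Pi.
Variables (R : realType) (p : seq A -> option A -> R).

Definition pi_factor (y : L) i := p (take i (body y)) (nth None (word y) i).

Lemma pi_prod (x y : L) : Lle x y ->
  pi p y x = \prod_(size (word x) <= i < size (word y)) pi_factor y i.
Proof. by rewrite /Defs.pi; case: eqVneq => [->|_ ->] //= _; rewrite big_geq. Qed.

Lemma pi_refl (x : L) : pi p x x = 1.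
Proof. by rewrite /Defs.pi eqxx. Qed.

Lemma pi_eq0 (x y : L) : ~~ Lle x y -> pi p y x = 0.
Proof.
by move=> xy; rewrite /Defs.pi xy; case: eqVneq => // E; rewrite E /Lle prefix_refl in xy.
Qed.

Lemma pi_factor_prefix (y z : L) i :
  Lle y z -> (i < size (word y))%N -> pi_factor y i = pi_factor z i.
Proof.
move=> /prefixP [s wz] iy.
have iz : (i < size (word z))%N by rewrite wz size_cat ltn_addr.
rewrite /pi_factor; have -> : take i (body y) = take i (body z).
  apply: (inj_map Some_inj); rewrite -(take_word iy) -(take_word iz).
  by rewrite wz [RHS]takel_cat // ltnW.
by rewrite wz (nth_cat None (word y)) iy.
Qed.

Lemma pi_mul (x w z : L) : Lle x w -> Lle w z -> pi p z x = pi p w x * pi p z w.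
Proof.
move=> xw wz; rewrite !pi_prod //; last exact: prefix_trans wz.
rewrite (big_cat_nat (size_prefix xw) (size_prefix wz)); congr (_ * _).
by apply: eq_big_nat => i /andP [_ iw]; rewrite (pi_factor_prefix wz iw).
Qed.

Hypothesis p_ge0 : forall s : seq A, ((size s).+2 <= N)%N -> forall o, 0 <= p s o.

Lemma pi_ge0 (x y : L) : 0 <= pi p y x.
Proof.
rewrite /Defs.pi; case: eqP => // _; case: ifP => // _.
rewrite big_nat_cond; apply: prodr_ge0 => i /andP [/andP [_ iy] _].
by apply: p_ge0; rewrite size_take_min; have := size_word_le y; lia.
Qed.

Variable t : R.
Hypothesis t_neq0 : t != 0.

Lemma powR_pi_root (x z : L) : word z = [::] -> pi p z x `^ t = (x == z)%:R.
Proof.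
move=> wz; have [->|xz] := eqVneq x z; first by rewrite pi_refl powR1.
rewrite pi_eq0 ?powR0 //; apply/negP => /(word_eq_nil wz) xz'.
by rewrite xz' eqxx in xz.
Qed.

Lemma powR_pi_Lchild (x w z : L) : Lchild w z ->
  pi p z x `^ t = (x == z)%:R + pi p w x `^ t * pi p z w `^ t.
Proof.
move=> wz; have [->|xz] := eqVneq x z.
  by rewrite pi_refl (pi_eq0 (Lchild_notLle wz)) powR1 powR0 // mul0r addr0.
rewrite add0r; have [xw|xw] := boolP (Lle x w).
  by rewrite (pi_mul xw (Lchild_Lle wz)) powRM ?pi_ge0.
rewrite (pi_eq0 xw) powR0 // mul0r pi_eq0 ?powR0 //.
by apply/negP => /(Lle_parent wz) [/eqP|]; [rewrite (negbTE xz) | apply/negP].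
Qed.

Lemma sum_zeta_inv_root (f : L -> R) (z : L) : word z = [::] ->
  \sum_y f y * zeta_inv_formula p t y z = f z.
Proof.
move=> wz; have noLchild y : Lchild y z = false.
  by apply/negbTE/negP => /size_Lchild; rewrite wz.
rewrite (bigD1 z) //= big1 => [|y yz]; rewrite /zeta_inv_formula noLchild.
  by rewrite eqxx mulr1 addr0.
by rewrite eq_sym (negbTE yz) mulr0.
Qed.

Lemma sum_zeta_inv_Lchild (f : L -> R) (w z : L) : Lchild w z ->
  \sum_y f y * zeta_inv_formula p t y z = f z - f w * pi p z w `^ t.
Proof.
move=> wz; have wz_neq := Lchild_neq wz.
have notLchild : Lchild z z = false by apply/negbTE/negP => /Lchild_neq/eqP.
rewrite (bigD1 z) // (bigD1 w) //= big1 ?addr0 => [|y /andP [yz yw]].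
  by rewrite /zeta_inv_formula notLchild wz eqxx mulr1 mulrN.
rewrite /zeta_inv_formula eq_sym (negbTE yz).
by case: ifP => [/Lchild_inj/(_ wz)/eqP|_]; rewrite ?(negbTE yw) ?mulr0.
Qed.

Lemma sum_zeta_zeta_inv (x z : L) :
  \sum_y pi p y x `^ t * zeta_inv_formula p t y z = (x == z)%:R.
Proof.
have [wz|/exists_parent [w wz]] := eqVneq (word z) [::].
  by rewrite sum_zeta_inv_root // powR_pi_root.
by rewrite (sum_zeta_inv_Lchild _ wz) (powR_pi_Lchild x wz) addrK.
Qed.

End Pi.

Lemma zeta_enum_mx (R : realType) (p : seq A -> option A -> R) (t : R) :
  zeta N p t = enum_mx (fun x y : L => pi p y x `^ t).
Proof. by []. Qed.

End Texts.

Theorem corollary3p8 (A : finType) (N : nat) (R : realType)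
  (p : seq A -> option A -> R) :
  (1 <= N)%N ->
  (* p(-|bot s) is a probability mass function on A u {dagger} for every
     unfinished text bot s in L with |bot s| <= N-1, i.e. |s| <= N-2 *)
  (forall s : seq A, ((size s).+2 <= N)%N ->
     (forall o : option A, 0 <= p s o) /\ \sum_(o : option A) p s o = 1) ->
  forall t : R, 0 < t ->
    @zeta A N R p t \in unitmx /\
    forall x y : Ltype A N,
      invmx (@zeta A N R p t) (enum_rank x) (enum_rank y) = @zeta_inv_formula A N R p t x y.
Proof.
move=> _ p_pmf t t_gt0.
have p_ge0 s : ((size s).+2 <= N)%N -> forall o, 0 <= p s o.
  by case/p_pmf.
have t_neq0 : t != 0 by rewrite gt_eqF.
have [zetaU inv_zeta] := invmx_enum_mx (sum_zeta_zeta_inv p_ge0 t_neq0).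
by rewrite zeta_enum_mx; split=> // x y; rewrite inv_zeta enum_mxE.
Qed.
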